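(* Let $n\ge 4$ with $n\equiv 2\pmod 6$, and let $G=P_4\cup P_{n-4}$ (disjoint union of a path on $4$ vertices and a path on $n-4$ vertices). Then $\operatorname{rank}(A_G+I_n)=\operatorname{rank}(A_{\overline G}+I_n)=n$.
   Context: All graphs are simple. $P_m$ is the path on $m$ vertices and $\cup$ denotes disjoint union of graphs. $A_G$ denotes the $n\times n$ adjacency matrix of $G$, $\overline{G}$ the complement of $G$, $I_n$ the identity matrix, and rank is over $\mathbb{R}$. *)

From HB Require Import structures.
From mathcomp Require Import all_boot all_order all_algebra.
Set Implicit Arguments. Unset Strict Implicit. Unset Printing Implicit Defensive.
Import Order.TTheory GRing.Theory Num.Theory.
Local Open Scope ring_scope.

Definition path_adj (R : pzRingType) (m : nat) : 'M[R]_m :=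
  \matrix_(i < m, j < m) (if (i.+1 == j :> nat) || (j.+1 == i :> nat) then 1 else 0).

Definition disj_union_adj (R : pzRingType) (m1 m2 : nat)
  (A1 : 'M[R]_m1) (A2 : 'M[R]_m2) : 'M[R]_(m1 + m2) :=
  block_mx A1 0 0 A2.

(* Adjacency matrix of the complement of the simple graph with adjacency
   (0/1, symmetric, zero-diagonal) matrix A. *)
Definition compl_adj (R : pzRingType) (n : nat) (A : 'M[R]_n) : 'M[R]_n :=
  \matrix_(i < n, j < n) (if i == j then 0 else 1 - A i j).

(* A kernel vector x of A(P_k) + I satisfies x_(j-1) + x_j + x_(j+1) = 0 with
   zero boundary values, so it is 3-periodic and vanishes unless k = 2 (mod 3).
   For the complement, A(Gbar) + I = J - A(G), so a kernel vector satisfies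
   x A(G) = s 1, where s is the sum of the entries of x; on a path this reads
   x_(j-1) + x_(j+1) = s, whose solutions are 4-periodic.  Summing these
   equations along an even path P_k shows that twice the sum of its entries is
   s times k rounded up to a multiple of 4; adding the two paths gives 2s = 4cs
   for a natural number c, so s = 0 in characteristic 0, and then x = 0.
   When n = 2 (mod 6), both n - 4 = 1 (mod 3) and n even hold. *)

From HB Require Import structures.
From mathcomp Require Import all_boot all_order all_algebra.
From mathcomp Require Import zify.
Import Order.TTheory GRing.Theory Num.Theory.
Local Open Scope ring_scope.

Section ThreeTermRecurrence.
Context {V : zmodType} {u : nat -> V} {k : nat}.
Hypothesis u_rec : forall j, (j < k)%N -> u j + u j.+1 + u j.+2 = 0.

Lemma three_term_mod i : (i <= k.+1)%N -> u i = u (i %% 3).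
Proof.
elim/ltn_ind: i => -[|[|[|j]]] // IHj hj.
have e1 := u_rec j ltac:(lia); have e2 := u_rec j.+1 ltac:(lia).
rewrite -addrA in e1; rewrite addrC in e2.
rewrite (addIr _ (etrans e2 (esym e1))) -addn3 modnDr.
by apply: IHj; lia.
Qed.

Hypotheses (u0 : u 0 = 0) (uk : u k.+1 = 0).

Lemma three_term_eq0 : (k %% 3 != 2)%N -> forall i, (i <= k.+1)%N -> u i = 0.
Proof.
move=> hk.
have u2 : (0 < k)%N -> u 2 = - u 1.
  move=> /u_rec; rewrite u0 add0r => /eqP.
  by rewrite addrC addr_eq0 => /eqP.
have u1 : u 1 = 0.
  case: (posnP k) => [k0 | /u2 {}u2]; first by rewrite -uk k0.
  have [e|e] : (k.+1 %% 3 = 1 \/ k.+1 %% 3 = 2)%N by lia.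
    by rewrite -uk (three_term_mod k.+1) // e.
  by apply: oppr_inj; rewrite oppr0 -u2 -uk (three_term_mod k.+1) // e.
move=> i hi; rewrite three_term_mod //.
have [->|[->|e]] : (i %% 3 = 0 \/ i %% 3 = 1 \/ i %% 3 = 2)%N by lia.
- exact: u0.
- exact: u1.
- by rewrite e u2 ?u1 ?oppr0 //; lia.
Qed.
End ThreeTermRecurrence.

Section TwoStepRecurrence.
Context {V : zmodType} {u : nat -> V} {k : nat} {s : V}.
Hypothesis u_rec : forall j, (j < k)%N -> u j + u j.+2 = s.

Lemma two_step_mod i : (i <= k.+1)%N -> u i = u (i %% 4).
Proof.
elim/ltn_ind: i => -[|[|[|[|j]]]] // IHj hj.
have e1 := u_rec j ltac:(lia); have e2 := u_rec j.+2 ltac:(lia).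
rewrite addrC in e2.
rewrite (addIr _ (etrans e2 (esym e1))) -addn4 modnDr.
by apply: IHj; lia.
Qed.

Hypotheses (u0 : u 0 = 0) (uk : u k.+1 = 0).

Lemma sum_two_step : (\sum_(i < k) u i.+1) *+ 2 = s *+ k + u 1 + u k.
Proof.
case: k u_rec uk => [|k'] rec uk'; first by rewrite big_ord0 uk' u0 mul0rn mulr0n !addr0.
set S := \sum_(i < k'.+1) u i.+1.
have lo : \sum_(j < k'.+1) u j = S - u k'.+1.
  by rewrite big_ord_recl /= u0 add0r /S big_ord_recr addrK.
have hi : \sum_(j < k'.+1) u j.+2 = S - u 1.
  by rewrite big_ord_recr /= uk' addr0 /S big_ord_recl addrC addKr.
have : \sum_(j < k'.+1) (u j + u j.+2) = s *+ k'.+1.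
  by rewrite (eq_bigr (fun=> s)) ?sumr_const ?card_ord // => j _; apply: rec.
rewrite big_split lo hi => <-.
by rewrite -(addrA _ (S - u 1)) subrK addrAC subrK mulr2n.
Qed.

Hypothesis k_even : ~~ odd k.

Lemma two_step_last : u k = s *+ (k %% 4 == 2)%N.
Proof.
rewrite two_step_mod //.
have [->|e] : (k %% 4 = 0 \/ k %% 4 = 2)%N by lia.
  by rewrite u0.
by rewrite e -(u_rec 0) ?u0 ?add0r //; lia.
Qed.

Lemma two_step_first : u 1 = u k.
Proof.
rewrite two_step_last.
have [e|e] : (k %% 4 = 0 \/ k %% 4 = 2)%N by lia.
  by rewrite e mulr0n -uk (two_step_mod k.+1) // -(addn1 k) -modnDml e.
rewrite e mulr1n -(u_rec k.-1); last by lia.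
have -> : k.-1.+2 = k.+1 by lia.
rewrite uk addr0 (two_step_mod k.-1); last by lia.
by have -> : (k.-1 %% 4 = 1)%N by lia.
Qed.

Lemma sum_two_step_even : (\sum_(i < k) u i.+1) *+ 2 = s *+ (4 * ((k + 2) %/ 4)).
Proof.
rewrite sum_two_step two_step_first -addrA two_step_last -mulr2n -mulrnA -mulrnDr.
congr (_ *+ _); have [e|e] : (k %% 4 = 0 \/ k %% 4 = 2)%N by lia.
all: by rewrite e; lia.
Qed.

Lemma two_step_eq0 : s = 0 -> forall i, (i <= k.+1)%N -> u i = 0.
Proof.
move=> s0 i hi; rewrite two_step_mod //.
have u1 : u 1 = 0 by rewrite two_step_first two_step_last s0 mul0rn.
have [->|[->|[e|e]]] : (i %% 4 = 0 \/ i %% 4 = 1 \/ i %% 4 = 2 \/ i %% 4 = 3)%N by lia.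
- exact: u0.
- exact: u1.
- by rewrite e -s0 -(u_rec 0) ?u0 ?add0r //; lia.
- by rewrite e; have := u_rec 1 ltac:(lia); rewrite u1 add0r s0.
Qed.
End TwoStepRecurrence.

Section PathAdjacency.
Context {F : fieldType}.

(* [pad x] is the sequence 0, x_0, ..., x_(k-1), 0, 0, ...: with the shift by one,
   both ends of the path get the same zero boundary condition. *)
Definition pad {k} (x : 'rV[F]_k) (t : nat) : F :=
  if t is t'.+1 then oapp (x 0) 0 (insub t') else 0.

Lemma pad_ord {k} (x : 'rV[F]_k) (i : 'I_k) : pad x i.+1 = x 0 i.
Proof. by rewrite /= valK. Qed.

Lemma pad_out {k} (x : 'rV[F]_k) t : (k < t)%N -> pad x t = 0.
Proof. by case: t => // t lt_kt; rewrite /= insubN // -leqNgt. Qed.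

Lemma sum_pad k (x : 'rV[F]_k) t :
  \sum_(i < k) (if i.+1 == t then x 0 i else 0) = pad x t.
Proof.
case: t => [|t]; first by rewrite big1.
have [lt_tk | le_kt] := ltnP t k; last first.
  rewrite pad_out // big1 // => i _; case: eqP => // [[ei]].
  by move: (ltn_ord i); rewrite ei ltnNge le_kt.
rewrite (pad_ord x (Ordinal lt_tk)) (bigD1 (Ordinal lt_tk)) //= eqxx big1 ?addr0 //.
by move=> i neq_it; case: eqP => // [[ei]]; case/eqP: neq_it; apply: val_inj.
Qed.

Lemma path_adj_mulmx k (x : 'rV[F]_k) (j : 'I_k) :
  (x *m path_adj F k) 0 j = pad x j + pad x j.+2.
Proof.
rewrite !mxE -!sum_pad -big_split; apply: eq_bigr => i _.
rewrite mxE eqSS [_.+1 == i]eq_sym.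
case: (i.+1 =P j) => [e|_]; case: (nat_of_ord i =P j.+1) => [e'|_] /=;
  rewrite ?mulr1 ?mulr0 ?addr0 ?add0r //; lia.
Qed.

Lemma path_adj_add1_eq0 k (x : 'rV[F]_k) :
  (k %% 3 != 2)%N -> x *m (path_adj F k + 1%:M) = 0 -> x = 0.
Proof.
move=> hk hx.
have rec j : (j < k)%N -> pad x j + pad x j.+1 + pad x j.+2 = 0.
  move=> lt_jk; move/rowP/(_ (Ordinal lt_jk)): hx.
  by rewrite mulmxDr mulmx1 [LHS]mxE path_adj_mulmx -(pad_ord x) mxE addrAC.
apply/rowP => i; rewrite mxE -pad_ord.
by apply: (three_term_eq0 rec) => //; [apply: pad_out | apply: leqW].
Qed.

Lemma rank_path_adj_add1 k : (k %% 3 != 2)%N -> \rank (path_adj F k + 1%:M)%R = k.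
Proof. by move=> hk; apply/eqP/inj_row_free => x; apply: path_adj_add1_eq0. Qed.

Lemma path_adj_diag k (i : 'I_k) : path_adj F k i i = 0.
Proof. by rewrite mxE gtn_eqF. Qed.

Section EvenPath.
Context {k : nat} {x : 'rV[F]_k} {s : F}.
Hypotheses (k_even : ~~ odd k) (hx : x *m path_adj F k = const_mx s).

Lemma path_adj_const_rec j : (j < k)%N -> pad x j + pad x j.+2 = s.
Proof.
move=> lt_jk; have := congr1 (fun M : 'rV_k => M 0 (Ordinal lt_jk)) hx.
by rewrite path_adj_mulmx mxE.
Qed.

Lemma sum_path_adj_const : (\sum_i x 0 i) *+ 2 = s *+ (4 * ((k + 2) %/ 4)).
Proof.
rewrite (eq_bigr (fun i : 'I_k => pad x i.+1)) => [|i _]; last by rewrite pad_ord.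
exact: (sum_two_step_even path_adj_const_rec erefl (pad_out x _ (ltnSn k)) k_even).
Qed.

Lemma path_adj_const0 : s = 0 -> x = 0.
Proof.
move=> s0; apply/rowP => i; rewrite mxE -pad_ord.
by apply: (two_step_eq0 path_adj_const_rec) => //; [apply: pad_out | apply: leqW].
Qed.
End EvenPath.
End PathAdjacency.

Section DisjointUnion.
Context {F : fieldType}.

Lemma disj_union_adj_add1 m1 m2 (A1 : 'M[F]_m1) (A2 : 'M[F]_m2) :
  disj_union_adj A1 A2 + 1%:M = disj_union_adj (A1 + 1%:M) (A2 + 1%:M).
Proof. by rewrite /disj_union_adj [1%:M]scalar_mx_block add_block_mx !addr0. Qed.

Lemma rank_disj_union_adj m1 m2 (A1 : 'M[F]_m1) (A2 : 'M[F]_m2) :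
  \rank (disj_union_adj A1 A2) = (\rank A1 + \rank A2)%N.
Proof. exact: rank_diag_block_mx. Qed.

Lemma disj_union_adj_diag m1 m2 (A1 : 'M[F]_m1) (A2 : 'M[F]_m2) :
  (forall i, A1 i i = 0) -> (forall i, A2 i i = 0) ->
  forall i, disj_union_adj A1 A2 i i = 0.
Proof.
move=> A1_0 A2_0 i; rewrite /disj_union_adj -(splitK i).
by case: (split i) => j; rewrite /= ?block_mxEul ?block_mxEdr.
Qed.

Lemma compl_adj_add1 n (A : 'M[F]_n) :
  (forall i, A i i = 0) -> compl_adj A + 1%:M = const_mx 1 - A.
Proof.
move=> A0; apply/matrixP => i j; rewrite !mxE.
by case: (i =P j) => [->|_]; rewrite ?A0 ?subr0 ?add0r ?addr0.
Qed.

Lemma mulmx_const1 n p (v : 'rV[F]_n) :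
  v *m (const_mx 1 : 'M_(n, p)) = const_mx (\sum_i v 0 i).
Proof. by apply/rowP => j; rewrite !mxE; apply: eq_bigr => i _; rewrite mxE mulr1. Qed.
End DisjointUnion.

Lemma rank_compl_even_paths (R : numFieldType) k1 k2 :
  ~~ odd k1 -> ~~ odd k2 ->
  \rank (const_mx 1 - disj_union_adj (path_adj R k1) (path_adj R k2))%R = (k1 + k2)%N.
Proof.
move=> k1_even k2_even; apply/eqP/inj_row_free => v.
set s := \sum_i v 0 i.
rewrite mulmxBr mulmx_const1 -/s => /eqP; rewrite subr_eq0 eq_sym => /eqP.
rewrite -[v in v *m _]hsubmxK mul_row_block !mulmx0 addr0 add0r -row_mx_const.
case/eq_row_mx => h1 h2.
have s_split : s = \sum_i lsubmx v 0 i + \sum_i rsubmx v 0 i.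
  by rewrite /s big_split_ord; congr (_ + _); apply: eq_bigr => i _; rewrite mxE.
have s0 : s = 0.
  apply/eqP; apply: contraT => nz_s.
  have : s *+ 2 = s *+ (4 * ((k1 + 2) %/ 4) + 4 * ((k2 + 2) %/ 4)).
    by rewrite {1}s_split mulrnDl mulrnDr; congr (_ + _); exact: sum_path_adj_const.
  by move/(mulrIn nz_s); lia.
rewrite s0 in h1 h2.
by rewrite -[v]hsubmxK (path_adj_const0 k1_even h1) ?(path_adj_const0 k2_even h2) ?row_mx0.
Qed.

Theorem proposition5p7 (R : realFieldType) (m : nat) :
  (4 + m = 2 %[mod 6])%N ->
  let A := disj_union_adj (path_adj R 4) (path_adj R m) in
  \rank ((A + 1%:M)%R) = (4 + m)%N /\ \rank ((compl_adj A + 1%:M)%R) = (4 + m)%N.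
Proof.
move=> hm A; split.
  by rewrite disj_union_adj_add1 rank_disj_union_adj !rank_path_adj_add1 //; lia.
rewrite compl_adj_add1; last by apply: disj_union_adj_diag; apply: path_adj_diag.
by rewrite rank_compl_even_paths //; lia.
Qed.
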